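(* Let $k\ge 3$, $\varepsilon\in[0,\tfrac12)$, let $b=(b_0,\dots,b_{k-1})$ be the counterclockwise vertices of a convex polygon (consecutive collinear vertices allowed), and let $b^+=\Phi_\varepsilon(b)$. For each $j\in\{0,\dots,k-1\}$ let $Q_j$ be the quadrilateral with corners $b_j, b_{j+1}, b^+_{j+1}, b^+_j$ in this cyclic order (indices mod $k$). Then no $Q_j$ is twisted (its boundary is not self-intersecting, i.e. the side $\overline{b_jb_{j+1}}$ does not cross the side $\overline{b^+_{j+1}b^+_j}$ and the side $\overline{b_{j+1}b^+_{j+1}}$ does not cross the side $\overline{b^+_jb_j}$ at a single interior point), and for $j\ne j'$ the quadrilaterals $Q_j$ and $Q_{j'}$ do not overlap (their interiors are disjoint).
   Context: The $\varepsilon$-GtM step is the map $\Phi_\varepsilon\colon(\mathbb{R}^2)^k\to(\mathbb{R}^2)^k$, $(b_0,\dots,b_{k-1})\mapsto(b_0^+,\dots,b_{k-1}^+)$ with $b_j^+=\varepsilon\frac{b_{j-1}+b_{j+1}}{2}+(1-\varepsilon)b_j$, indices modulo $k$. The quadrilaterals $Q_j$ are called wave-segments; together they partition the region between the polygon $b$ and the polygon $b^+$. *)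

From mathcomp Require Import all_boot all_order all_algebra.
Set Implicit Arguments. Unset Strict Implicit. Unset Printing Implicit Defensive.
Import Order.TTheory GRing.Theory Num.Theory.
Local Open Scope ring_scope.

Section Geom.
Variable R : realFieldType.
Notation pt := (R * R)%type.

(* Twice the signed area of the triangle (p, q, r): > 0 iff counterclockwise. *)
Definition orient (p q r : pt) : R :=
  (q.1 - p.1) * (r.2 - p.2) - (q.2 - p.2) * (r.1 - p.1).

Definition on_seg (p q x : pt) : Prop :=
  exists t : R, 0 <= t <= 1 /\ x = (p.1 + t * (q.1 - p.1), p.2 + t * (q.2 - p.2)).

(* The open segments (p,q) and (r,s) cross at a single point interior to both. *)
Definition proper_cross (p q r s : pt) : Prop :=
  orient p q r * orient p q s < 0 /\ orient r s p * orient r s q < 0.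

Definition twisted (a b c d : pt) : Prop :=
  proper_cross a b c d \/ proper_cross b c d a.

(* Signed crossing contribution of the directed edge p -> q to the winding
   number around x (horizontal ray to the right, half-open convention). *)
Definition wind_edge (p q x : pt) : int :=
  if (p.2 <= x.2) && (x.2 < q.2) && (0 < orient p q x) then 1
  else if (q.2 <= x.2) && (x.2 < p.2) && (orient p q x < 0) then -1
  else 0.

(* Winding number of the closed quadrilateral a -> b -> c -> d -> a around x
   (meaningful for x off the boundary). *)
Definition wind_quad (a b c d x : pt) : int :=
  wind_edge a b x + wind_edge b c x + wind_edge c d x + wind_edge d a x.

Definition on_quad_boundary (a b c d x : pt) : Prop :=
  on_seg a b x \/ on_seg b c x \/ on_seg c d x \/ on_seg d a x.

Definition quad_interior (a b c d x : pt) : Prop :=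
  ~ on_quad_boundary a b c d x /\ wind_quad a b c d x != 0.

(* b_0,...,b_{k-1} are the counterclockwise vertices of a convex polygon,
   consecutive collinear vertices allowed: vertices pairwise distinct, every
   vertex weakly to the left of every directed edge b_i b_{i+1}, and the polygon
   has nonempty interior (some strictly counterclockwise triple). *)
Definition convex_ccw (k : nat) (b : 'I_k -> pt) : Prop :=
  injective b /\
  (forall i j : 'I_k, 0 <= orient (b i) (b (ordS i)) (b j)) /\
  (exists i j l : 'I_k, 0 < orient (b i) (b j) (b l)).

Definition Phi (eps : R) (k : nat) (b : 'I_k -> pt) : 'I_k -> pt :=
  fun j =>
    (eps * ((b (ord_pred j)).1 + (b (ordS j)).1) / 2 + (1 - eps) * (b j).1,
     eps * ((b (ord_pred j)).2 + (b (ordS j)).2) / 2 + (1 - eps) * (b j).2).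

End Geom.

(* Each vertex of b^+ is the mix b^+_j = (eps/2) b_{j-1} + (1 - eps) b_j + (eps/2) b_{j+1}.
   Orientation is affine in each argument, so every orientation built from such mixes
   expands into orientations of vertices of b with coefficients that are nonnegative
   for eps < 1/2.  Convexity of b makes all the expanded terms nonnegative once one
   knows that, seen from any vertex b_i, the vertices b_{i+1}, ..., b_{i+k-1} turn
   counterclockwise.  This gives: both corners b^+_j, b^+_{j+1} lie left of b_j b_{j+1},
   and one of the two triangulations of Q_j is positively oriented, which rules out
   twisting; moreover b^+ is again a weakly convex counterclockwise polygon.

   For the overlap, a positively oriented triangle, hence Q_j, has nonnegative winding
   number around every point, and the winding numbers of the Q_j telescope to
   wind(b) - wind(b^+).  A convex polygon winds nonnegatively around every point, and
   at most once around any point of b since no horizontal line meets two upward edges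
   of b.  A point interior to two wave-segments would have total winding at least 2.
   Consecutive collinear vertices are handled by showing that no vertex lies strictly
   inside an edge. *)

From mathcomp Require Import all_boot all_order all_algebra.
From mathcomp Require Import ring lra zify.
Set Implicit Arguments. Unset Strict Implicit. Unset Printing Implicit Defensive.
Import Order.TTheory GRing.Theory Num.Theory.
Local Open Scope ring_scope.

(** * Orientation, lines and the GtM mix *)

Section Geometry.
Variable R : realFieldType.
Notation pt := (R * R)%type.
Implicit Types (p q r s u w x : pt) (a c : R).

Lemma orient_rot p q r : orient p q r = orient q r p.
Proof. by rewrite /orient; ring. Qed.

Lemma orient_swap p q r : orient q p r = - orient p q r.
Proof. by rewrite /orient; ring. Qed.

Lemma orient_ppq p q : orient p p q = 0.
Proof. by rewrite /orient; ring. Qed.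

Lemma orient_pqp p q : orient p q p = 0.
Proof. by rewrite /orient; ring. Qed.

Lemma orient_pqq p q : orient p q q = 0.
Proof. by rewrite /orient; ring. Qed.

Definition lerp u w a : pt := (u.1 + a * (w.1 - u.1), u.2 + a * (w.2 - u.2)).

Definition line_coord u w x : R :=
  ((w.1 - u.1) * (x.1 - u.1) + (w.2 - u.2) * (x.2 - u.2)) /
  ((w.1 - u.1) ^+ 2 + (w.2 - u.2) ^+ 2).

Lemma lerp0 u w : lerp u w 0 = u.
Proof. by case: u => ? ?; rewrite /lerp /= !mul0r !addr0. Qed.

Lemma lerp1 u w : lerp u w 1 = w.
Proof. by case: u => u1 u2; case: w => w1 w2; rewrite /lerp /= !mul1r !subrKC. Qed.

Lemma lerp_lerp u w a c t :
  lerp (lerp u w a) (lerp u w c) t = lerp u w (a + t * (c - a)).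
Proof. by rewrite /lerp /=; congr (_, _); ring. Qed.

Lemma orient_lerp u w a c x :
  orient (lerp u w a) (lerp u w c) x = (c - a) * orient u w x.
Proof. by rewrite /orient /=; ring. Qed.

Lemma orient_on_lerp u w a : orient u w (lerp u w a) = 0.
Proof. by rewrite /orient /=; ring. Qed.

Lemma orient_lerp_mid u w a x : orient u (lerp u w a) x = a * orient u w x.
Proof. by rewrite /orient /=; ring. Qed.

Lemma orient_lerp_last u w a x : orient u x (lerp u w a) = - a * orient u w x.
Proof. by rewrite /orient /=; ring. Qed.

Lemma sqr_dist_gt0 u w : u <> w -> 0 < (w.1 - u.1) ^+ 2 + (w.2 - u.2) ^+ 2.
Proof.
case: u w => [u1 u2] [w1 w2] /= neq_uw.
rewrite lt_def paddr_eq0 ?sqr_ge0 // ?addr_ge0 ?sqr_ge0 // andbT !sqrf_eq0 !subr_eq0.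
by apply/negP => /andP[/eqP e1 /eqP e2]; apply: neq_uw; rewrite e1 e2.
Qed.

Lemma line_coordK u w : u <> w -> cancel (lerp u w) (line_coord u w).
Proof.
move=> /sqr_dist_gt0 /lt0r_neq0 N0 a; rewrite /line_coord /lerp /=.
by apply: (mulIf N0); rewrite divfK //; ring.
Qed.

Lemma lerp_inj u w : u <> w -> injective (lerp u w).
Proof. by move/line_coordK/can_inj. Qed.

Lemma collinear_lerp u w x :
  u <> w -> orient u w x = 0 -> x = lerp u w (line_coord u w x).
Proof.
move=> /sqr_dist_gt0 /lt0r_neq0 N0; case: x => x1 x2 col.
rewrite /lerp /line_coord /=; congr (_, _).
- have -> : ((w.1 - u.1) * (x1 - u.1) + (w.2 - u.2) * (x2 - u.2)) /
      ((w.1 - u.1) ^+ 2 + (w.2 - u.2) ^+ 2) * (w.1 - u.1)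
    = x1 - u.1 + (w.2 - u.2) * orient u w (x1, x2) / ((w.1 - u.1) ^+ 2 + (w.2 - u.2) ^+ 2).
    by rewrite /orient /=; field.
  by rewrite col mulr0 mul0r addr0 subrKC.
- have -> : ((w.1 - u.1) * (x1 - u.1) + (w.2 - u.2) * (x2 - u.2)) /
      ((w.1 - u.1) ^+ 2 + (w.2 - u.2) ^+ 2) * (w.2 - u.2)
    = x2 - u.2 - (w.1 - u.1) * orient u w (x1, x2) / ((w.1 - u.1) ^+ 2 + (w.2 - u.2) ^+ 2).
    by rewrite /orient /=; field.
  by rewrite col mulr0 mul0r subr0 subrKC.
Qed.

Lemma orient_collinear u w p q r : u <> w ->
  orient u w p = 0 -> orient u w q = 0 -> orient u w r = 0 -> orient p q r = 0.
Proof.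
move=> neq_uw /(collinear_lerp neq_uw)-> /(collinear_lerp neq_uw)->
  /(collinear_lerp neq_uw)->.
by rewrite orient_lerp orient_on_lerp mulr0.
Qed.

Definition mix e (a u v : pt) : pt :=
  (e * (a.1 + v.1) / 2 + (1 - e) * u.1, e * (a.2 + v.2) / 2 + (1 - e) * u.2).

Lemma orient_mix p q e (a u v : pt) : orient p q (mix e a u v) =
  e / 2 * orient p q a + (1 - e) * orient p q u + e / 2 * orient p q v.
Proof. by rewrite /orient /=; field. Qed.

Lemma orient_mix_mix e (a u v w x : pt) : orient (mix e a u v) (mix e u v w) x =
  e ^+ 2 / 4 * (orient a u x + orient a w x + orient v w x)
  + e * (1 - e) / 2 * (orient a v x + orient u w x)
  + (1 - 3 * e / 2) * (1 - e / 2) * orient u v x.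
Proof. by rewrite /orient /=; field. Qed.

Lemma orient_mix_triangle e (a u v : pt) :
  orient (mix e v a u) (mix e a u v) (mix e u v a) = (1 - 3 * e / 2) ^+ 2 * orient a u v.
Proof. by rewrite /orient /=; field. Qed.

Lemma orient_mix_consecutive e (p1 p2 p3 p4 p5 : pt) :
  orient (mix e p1 p2 p3) (mix e p2 p3 p4) (mix e p3 p4 p5) =
  e ^+ 3 / 8 * (orient p1 p2 p3 + orient p1 p2 p5 + orient p1 p4 p5 + orient p3 p4 p5)
  + e ^+ 2 * (1 - e) / 4 * (orient p1 p2 p4 + orient p1 p3 p5 + orient p2 p4 p5)
  + e / 2 * ((1 - e / 2) * (1 - 3 * e / 2)) * (orient p1 p3 p4 + orient p2 p3 p5)
  + (1 - e) * (1 - 2 * e + e ^+ 2 / 2) * orient p2 p3 p4.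
Proof. by rewrite /orient /=; field. Qed.

Lemma orient_mix_diagonals e (a u v w : pt) :
  (1 - e / 2) * orient u (mix e u v w) (mix e a u v)
    + e / 2 * orient v (mix e u v w) (mix e a u v)
  = e / 2 * ((1 - 3 * e / 2) * orient u v a + e / 2 * orient a u w).
Proof. by rewrite /orient /=; field. Qed.

Definition behind u w x := orient u w x = 0 /\ line_coord u w x < 0.
Definition ahead u w x := orient u w x = 0 /\ 0 < line_coord u w x.

End Geometry.

(** * Winding numbers *)

Section Winding.
Variable R : realFieldType.
Notation pt := (R * R)%type.
Implicit Types (p q r s x : pt).

Definition crosses_up p q x : bool := (p.2 <= x.2) && (x.2 < q.2).

Lemma wind_edge_swap p q x : wind_edge q p x = - wind_edge p q x.
Proof.
rewrite /wind_edge orient_swap oppr_gt0 oppr_lt0.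
case: (lerP p.2 x.2); case: (ltrP x.2 q.2); case: (lerP q.2 x.2); case: (ltrP x.2 p.2);
  case: (ltrgtP (orient p q x) 0) => /=; lra.
Qed.

Lemma wind_edge_le_up p q x : wind_edge p q x <= (crosses_up p q x)%:Z.
Proof.
rewrite /wind_edge /crosses_up.
by case: (lerP p.2 x.2); case: (ltrP x.2 q.2); case: (lerP q.2 x.2); case: (ltrP x.2 p.2);
  case: (ltrgtP (orient p q x) 0).
Qed.

Lemma wind_edge_lt0 p q x : wind_edge p q x < 0 -> crosses_up q p x /\ orient p q x < 0.
Proof.
rewrite /wind_edge /crosses_up.
by case: (lerP p.2 x.2); case: (ltrP x.2 q.2); case: (lerP q.2 x.2); case: (ltrP x.2 p.2);
  case: (ltrgtP (orient p q x) 0).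
Qed.

Lemma wind_edge_ge_crossings p q x : (crosses_up p q x -> 0 < orient p q x) ->
  (crosses_up p q x)%:Z - (crosses_up q p x)%:Z <= wind_edge p q x.
Proof.
rewrite /wind_edge /crosses_up.
case: (lerP p.2 x.2); case: (ltrP x.2 q.2); case: (lerP q.2 x.2); case: (ltrP x.2 p.2);
  case: (ltrgtP (orient p q x) 0) => //= *; lra.
Qed.

Lemma left_of_up_edge p q r s x :
  crosses_up q p x -> orient p q x < 0 -> crosses_up r s x ->
  0 <= orient r s p -> 0 <= orient r s q -> 0 < orient r s x.
Proof.
move=> /andP[qx xp] pqx /andP[rx xs] rsp rsq.
have E : (p.2 - q.2) * orient r s x = (p.2 - x.2) * orient r s q
    + (x.2 - q.2) * orient r s p + (s.2 - r.2) * - orient p q x.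
  by rewrite /orient; ring.
have pq : 0 < p.2 - q.2 by rewrite subr_gt0 (le_lt_trans qx xp).
have t1 : 0 <= (p.2 - x.2) * orient r s q by rewrite mulr_ge0 // subr_ge0 ltW.
have t2 : 0 <= (x.2 - q.2) * orient r s p by rewrite mulr_ge0 // subr_ge0.
have t3 : 0 < (s.2 - r.2) * - orient p q x.
  by rewrite mulr_gt0 ?oppr_gt0 // subr_gt0 (le_lt_trans rx xs).
by rewrite -(pmulr_rgt0 _ pq) E; lra.
Qed.

Definition wind_poly k (P : 'I_k -> pt) x : int :=
  \sum_(j < k) wind_edge (P j) (P (ordS j)) x.

Lemma sum_crossings_eq0 k (P : 'I_k -> pt) x :
  \sum_(j < k) ((crosses_up (P j) (P (ordS j)) x)%:Z
                - (crosses_up (P (ordS j)) (P j) x)%:Z) = 0.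
Proof.
under eq_bigr => j _.
  have -> : (crosses_up (P j) (P (ordS j)) x)%:Z - (crosses_up (P (ordS j)) (P j) x)%:Z
      = (x.2 < (P (ordS j)).2)%R%:Z - (x.2 < (P j).2)%R%:Z.
    by rewrite /crosses_up; case: (lerP (P j).2 x.2); case: (ltrP x.2 (P (ordS j)).2).
  over.
by rewrite sumrB [X in _ - X](reindex_inj (@ordS_inj k)) subrr.
Qed.

Lemma wind_poly_ge0 k (P : 'I_k -> pt) x :
  (forall j m, 0 <= orient (P j) (P (ordS j)) (P m)) -> 0 <= wind_poly P x.
Proof.
move=> P_left.
case: (pickP (fun d => wind_edge (P d) (P (ordS d)) x < 0)) => [d /wind_edge_lt0[dn dx]|nonneg].
  rewrite -(sum_crossings_eq0 P x); apply: ler_sum => j _.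
  apply: wind_edge_ge_crossings => up_j.
  exact: left_of_up_edge dn dx up_j (P_left _ _) (P_left _ _).
by apply: sumr_ge0 => j _; rewrite leNgt nonneg.
Qed.

Lemma wind_tri_ge0 p q r x : 0 <= orient p q r ->
  0 <= wind_edge p q x + wind_edge q r x + wind_edge r p x.
Proof.
move=> pqr; pose P (i : 'I_3) := nth p [:: p; q; r] i.
have := @wind_poly_ge0 3 P x.
rewrite /wind_poly !big_ord_recr big_ord0 /= add0r; apply.
have qrp := pqr; rewrite orient_rot in qrp; have rpq := qrp; rewrite orient_rot in rpq.
by move=> [[|[|[|//]]] ?] [[|[|[|//]]] ?]; rewrite /= ?orient_ppq ?orient_pqp ?orient_pqq.
Qed.

End Winding.

(** * Weakly convex counterclockwise polygons *)

Section ConvexPolygon.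
Variable R : realFieldType.
Notation pt := (R * R)%type.
Variables (k : nat) (b : 'I_k -> pt).
Hypothesis k_ge3 : (3 <= k)%N.
Hypothesis b_inj : injective b.
Hypothesis b_left : forall i j : 'I_k, 0 <= orient (b i) (b (ordS i)) (b j).
Hypothesis b_nondeg : exists i j l : 'I_k, 0 < orient (b i) (b j) (b l).

Lemma ordS_neq (i : 'I_k) : ordS i <> i.
Proof.
move=> /(congr1 val) /=; have := ltn_ord i.
case: (ltnP i.+1 k) => [lt_ik _|le_ki lt_ik]; first by rewrite modn_small //; lia.
have -> : i.+1 = k by lia.
by rewrite modnn; lia.
Qed.

Lemma edge_neq (i : 'I_k) : b i <> b (ordS i).
Proof. by move/b_inj/esym; apply: ordS_neq. Qed.

Lemma not_all_collinear u w : u <> w -> ~ (forall X, orient u w (b X) = 0).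
Proof.
move=> uw col; have [i [j [l]]] := b_nondeg.
by rewrite (orient_collinear uw (col i) (col j) (col l)) ltxx.
Qed.

Section EdgeLine.
Variables u w : pt.
Hypothesis uw : u <> w.

(* The edge into a vertex lying strictly inside a collinear edge must lie on the same
   line and point forwards: pointing backwards would put every vertex on the line. *)
Lemma pred_vertex_behind j t a c s :
  b j = lerp u w a -> b (ordS j) = lerp u w c -> b t = lerp u w s -> a < s < c ->
  b (ord_pred t) = lerp u w (line_coord u w (b (ord_pred t))) /\
  line_coord u w (b (ord_pred t)) < s.
Proof.
move=> bj bj1 bt /andP[lt_as lt_sc]; set tp := ord_pred t.
have etp : ordS tp = t := ord_predK t.
have o1 := b_left tp j; have o2 := b_left tp (ordS j).
rewrite etp bt bj in o1; rewrite etp bt bj1 in o2.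
have E : (c - s) * orient (b tp) (lerp u w s) (lerp u w a)
    + (s - a) * orient (b tp) (lerp u w s) (lerp u w c) = 0.
  by rewrite /orient /=; ring.
have col : orient u w (b tp) = 0.
  have t1 : 0 <= (c - s) * orient (b tp) (lerp u w s) (lerp u w a).
    by rewrite mulr_ge0 // subr_ge0 ltW.
  have t2 : 0 <= (s - a) * orient (b tp) (lerp u w s) (lerp u w c).
    by rewrite mulr_ge0 // subr_ge0 ltW.
  have /eqP : (c - s) * orient (b tp) (lerp u w s) (lerp u w a) = 0 by lra.
  have cs0 : c - s != 0 by rewrite subr_eq0 gt_eqF.
  have as0 : a - s != 0 by rewrite subr_eq0 lt_eqF.
  by rewrite orient_rot orient_lerp !mulf_eq0 (negbTE cs0) (negbTE as0) => /eqP.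
have ebtp := collinear_lerp uw col; split=> //; set sp := line_coord u w (b tp) in ebtp *.
case: (ltrgtP sp s) => // [lt_ssp|esp]; last first.
  by exfalso; apply: (ordS_neq (i := tp)); rewrite etp; apply: b_inj; rewrite ebtp bt esp.
exfalso; apply: (not_all_collinear uw) => X; apply/eqP; rewrite eq_le.
have := b_left j X; have := b_left tp X.
rewrite etp ebtp bt bj bj1 !orient_lerp nmulr_rge0 ?subr_lt0 // => -> /=.
by rewrite pmulr_rge0 // subr_gt0 (lt_trans lt_as).
Qed.

(* The inner vertex is replaced by one strictly earlier along the line (its predecessor,
   or b_j when the predecessor lies before b_j); descend on the number of vertices
   earlier than it. *)
Lemma no_vertex_inside_collinear_edge j t a c s :
  b j = lerp u w a -> b (ordS j) = lerp u w c -> b t = lerp u w s -> a < s < c -> False.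
Proof.
move: {2}_.+1 (ltnSn #|[set t' | line_coord u w (b t') < s]|) => n.
elim: n j t a c s => // n IH j t a c s lt_n bj bj1 bt /andP[lt_as lt_sc].
have [ebtp lt_sps] := pred_vertex_behind bj bj1 bt (introT andP (conj lt_as lt_sc)).
set tp := ord_pred t in ebtp lt_sps *.
set sp := line_coord u w (b tp) in ebtp lt_sps *.
have etp : ordS tp = t := ord_predK t.
have fewer t' : line_coord u w (b t') < s ->
    (#|[set t'' | (line_coord u w (b t'') < line_coord u w (b t'))%R]| < n)%N.
  move=> lt_t's; rewrite -ltnS; apply: leq_trans lt_n; apply: proper_card.
  apply/properP; split; last by exists t'; rewrite !inE ?ltxx.
  by apply/subsetP => y; rewrite !inE => /lt_trans; apply.
have coordK := line_coordK uw.
case: (ltrgtP sp a) => [lt_spa|lt_asp|espa].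
- apply: (IH tp j sp s a) => //; last by rewrite lt_spa.
    by have := fewer j; rewrite bj coordK; apply.
  by rewrite etp.
- apply: (IH j tp a c sp) => //; last by rewrite lt_asp (lt_trans lt_sps).
  by have := fewer tp; rewrite ebtp coordK; apply.
- have ejtp : tp = j by apply: b_inj; rewrite ebtp bj espa.
  by move: bt; rewrite -etp ejtp bj1 => /(lerp_inj uw) ecs; rewrite ecs ltxx in lt_sc.
Qed.

End EdgeLine.

Lemma vertex_notin_edge j t s : 0 < s < 1 -> b t <> lerp (b j) (b (ordS j)) s.
Proof.
move=> s01 bt.
apply: (no_vertex_inside_collinear_edge (@edge_neq j) _ _ bt s01).
  by rewrite lerp0.
by rewrite lerp1.
Qed.

Lemma edge_avoids_vertex i t w a c :
  b t = lerp (b i) w a -> b (ordS t) = lerp (b i) w c -> a < 0 < c -> False.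
Proof.
move=> bt bt1 /andP[lt_a0 lt_0c].
have lt0ca : 0 < c - a by rewrite subr_gt0 (lt_trans lt_a0).
apply: (@vertex_notin_edge t i (- a / (c - a))).
  by rewrite divr_gt0 ?oppr_gt0 //= ltr_pdivrMr // mul1r; lra.
by rewrite bt bt1 lerp_lerp mulfVK ?lt0r_neq0 // subrr lerp0.
Qed.

Lemma collinear_up_edges_eq i l x :
  crosses_up (b i) (b (ordS i)) x -> crosses_up (b l) (b (ordS l)) x ->
  orient (b i) (b (ordS i)) (b l) = 0 -> orient (b i) (b (ordS i)) (b (ordS l)) = 0 ->
  i = l.
Proof.
move=> /andP[pi iq] /andP[rl ls] /(collinear_lerp (@edge_neq i)) er
  /(collinear_lerp (@edge_neq i)) es.
move: er es; set p := b i; set q := b (ordS i); set r := b l; set s := b (ordS l).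
set sr := line_coord p q r; set ss := line_coord p q s => er es.
have pq : 0 < q.2 - p.2 by rewrite subr_gt0 (le_lt_trans pi iq).
have lt0ss : 0 < ss.
  rewrite -(pmulr_lgt0 _ pq).
  have -> : ss * (q.2 - p.2) = (lerp p q ss).2 - p.2 by rewrite /=; ring.
  by rewrite -es subr_gt0 (le_lt_trans pi ls).
have ltsr1 : sr < 1.
  rewrite -subr_gt0 -(pmulr_lgt0 _ pq).
  have -> : (1 - sr) * (q.2 - p.2) = q.2 - (lerp p q sr).2 by rewrite /=; ring.
  by rewrite -er subr_gt0 (le_lt_trans rl iq).
case: (ltrgtP sr 0) => [lt_sr0|lt0sr|sr0].
- by exfalso; apply: (edge_avoids_vertex er es); rewrite lt_sr0 lt0ss.
- by exfalso; apply: (@vertex_notin_edge i l sr); rewrite ?lt0sr.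
- by apply: b_inj; rewrite -/p -/r er sr0 lerp0.
Qed.

Lemma upward_edge_unique i l x :
  crosses_up (b i) (b (ordS i)) x -> crosses_up (b l) (b (ordS l)) x -> i = l.
Proof.
move=> up_i up_l; move: (up_i) (up_l) => /andP[pi iq] /andP[rl ls].
have pqr := b_left i l; have pqs := b_left i (ordS l).
have rsp := b_left l i; have rsq := b_left l (ordS i).
move: pi iq rl ls pqr pqs rsp rsq.
set p := b i; set q := b (ordS i); set r := b l; set s := b (ordS l); set h := x.2.
move=> pi iq rl ls pqr pqs rsp rsq.
(* Both edges cross height h, so each of the four nonnegative terms vanishes. *)
have E : (s.2 - h) * orient p q r + (h - r.2) * orient p q s + (q.2 - h) * orient r s p
    + (h - p.2) * orient r s q = 0 by rewrite /orient; ring.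
have t1 : 0 <= (s.2 - h) * orient p q r by rewrite mulr_ge0 // subr_ge0 ltW.
have t2 : 0 <= (h - r.2) * orient p q s by rewrite mulr_ge0 // subr_ge0.
have t3 : 0 <= (q.2 - h) * orient r s p by rewrite mulr_ge0 // subr_ge0 ltW.
have t4 : 0 <= (h - p.2) * orient r s q by rewrite mulr_ge0 // subr_ge0.
have /eqP : (s.2 - h) * orient p q r = 0 by lra.
rewrite mulf_eq0 subr_eq0 gt_eqF //= => /eqP o_pqr.
have /eqP : (q.2 - h) * orient r s p = 0 by lra.
rewrite mulf_eq0 subr_eq0 gt_eqF //= => /eqP o_rsp.
have /eqP : (h - r.2) * orient p q s = 0 by lra.
case: (eqVneq (orient p q s) 0) => [o_pqs _|ne_pqs].
  exact: collinear_up_edges_eq up_i up_l o_pqr o_pqs.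
rewrite mulf_eq0 (negbTE ne_pqs) orbF subr_eq0 => /eqP hr.
have ne_rsq : orient r s q != 0.
  apply: contra ne_pqs => /eqP o_rsq; apply/eqP.
  exact: orient_collinear (@edge_neq l) o_rsp o_rsq (orient_pqq r s).
have /eqP : (h - p.2) * orient r s q = 0 by lra.
rewrite mulf_eq0 (negbTE ne_rsq) orbF subr_eq0 => /eqP hp.
have rp1 : r.1 = p.1.
  have qh : q.2 - h != 0 by rewrite subr_eq0 gt_eqF.
  apply/eqP; rewrite -subr_eq0; move: o_pqr; rewrite /orient -hr -hp subrr mulr0 sub0r.
  by move/eqP; rewrite oppr_eq0 mulf_eq0 (negbTE qh).
by apply: b_inj; rewrite -/p -/r [p]surjective_pairing [r]surjective_pairing rp1 -hr -hp.
Qed.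

Lemma wind_poly_le1 x : wind_poly b x <= 1.
Proof.
apply: le_trans (ler_sum _ (fun j _ => wind_edge_le_up (b j) (b (ordS j)) x)) _.
case: (pickP (fun j => crosses_up (b j) (b (ordS j)) x)) => [i up_i|none]; last first.
  by rewrite big1 // => j _; rewrite none.
rewrite (bigD1 i) //= up_i big1 ?addr0 // => j ne_ji.
case: (boolP (crosses_up _ _ _)) => // up_j.
by move: ne_ji; rewrite (upward_edge_unique up_j up_i) eqxx.
Qed.

Definition shift (i : 'I_k) (m : nat) : 'I_k := iter m (@ordS k) i.

Lemma shiftS i m : ordS (shift i m) = shift i m.+1.
Proof. by rewrite /shift iterS. Qed.

Lemma val_shift i m : val (shift i m) = ((i + m) %% k)%N.
Proof.
elim: m => [|m IH]; first by rewrite addn0 modn_small.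
by rewrite -shiftS /= IH -addn1 modnDml addn1 addnS.
Qed.

Lemma shift_pred i m : ord_pred (shift i m.+1) = shift i m.
Proof. by rewrite -shiftS ordSK. Qed.

Lemma shift_add i m n : shift (shift i m) n = shift i (m + n).
Proof. by rewrite /shift addnC iterD. Qed.

Lemma shiftk i : shift i k = i.
Proof. by apply: val_inj; rewrite val_shift modnDr modn_small. Qed.

Lemma shift_surj i j : exists2 d, (d < k)%N & j = shift i d.
Proof.
exists ((j + (k - i)) %% k)%N; first by rewrite ltn_pmod // (leq_trans _ k_ge3).
apply: val_inj; rewrite val_shift modnDmr.
have -> : (i + (j + (k - i)) = j + k)%N by have := ltn_ord i; lia.
by rewrite modnDr modn_small.
Qed.

Lemma shift_neq i d : (0 < d < k)%N -> shift i d <> i.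
Proof.
move=> /andP[d_gt0 lt_dk] /(congr1 val) /=; rewrite val_shift; have := ltn_ord i.
case: (ltnP (i + d) k) => [lt_idk _|le_kid lt_ik]; first by rewrite modn_small //; lia.
have -> : (i + d = (i + d - k) + k)%N by lia.
by rewrite modnDr modn_small; lia.
Qed.

(* Orientation alone cannot see the sequence jump from behind b_i to ahead of it on the
   line b_i b_{i+1}; the second conjunct of the invariant excludes this. *)
Lemma fan_step i m n : (0 < m <= n)%N -> (n.+1 < k)%N ->
  0 <= orient (b i) (b (shift i m)) (b (shift i n)) ->
  ~ (behind (b i) (b (ordS i)) (b (shift i m)) /\ ahead (b i) (b (ordS i)) (b (shift i n))) ->
  0 <= orient (b i) (b (shift i m)) (b (shift i n.+1)) /\
  ~ (behind (b i) (b (ordS i)) (b (shift i m)) /\ ahead (b i) (b (ordS i)) (b (shift i n.+1))).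
Proof.
move=> /andP[m_gt0 le_mn] lt_n1k.
have edge_n : 0 <= orient (b i) (b (shift i n)) (b (shift i n.+1)).
  by have := b_left (shift i n) i; rewrite shiftS -orient_rot.
have uw := @edge_neq i; have left_uw := b_left i; rewrite /behind /ahead.
move: edge_n; set u := b i; set w := b (ordS i); set Xm := b (shift i m).
set Xn := b (shift i n); set Xn1 := b (shift i n.+1) => edge_n fan_mn not_mn.
case: (ltrgtP 0 (orient u w Xn)) => [uwXn|uwXn|/esym colXn].
- split.
    have Id : orient u Xm Xn1 * orient u w Xn =
        orient u Xn Xn1 * orient u w Xm + orient u Xm Xn * orient u w Xn1.
      by rewrite /orient; ring.
    by rewrite -(pmulr_lge0 _ uwXn) Id addr_ge0 ?mulr_ge0 ?left_uw.
  move=> [_ [/(collinear_lerp uw) eXn1 gt0]]; move: edge_n.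
  by rewrite eXn1 orient_lerp_last mulNr oppr_ge0 pmulr_rle0 // leNgt uwXn.
- by move: (left_uw (shift i n)); rewrite leNgt uwXn.
have eXn := collinear_lerp uw colXn; set la := line_coord u w Xn in eXn.
case: (ltrgtP la 0) => [la_lt0|la_gt0|la0].
- have col1 : orient u w Xn1 = 0.
    apply/eqP; rewrite eq_le left_uw andbT.
    by move: edge_n; rewrite eXn orient_lerp_mid nmulr_rge0.
  have eXn1 := collinear_lerp uw col1; set nu := line_coord u w Xn1 in eXn1.
  have nu_le0 : nu <= 0.
    rewrite leNgt; apply/negP => nu_gt0.
    by apply: (edge_avoids_vertex eXn _ (introT andP (conj la_lt0 nu_gt0))); rewrite shiftS.
  split; last by move=> [_ [_]]; rewrite -/nu ltNge nu_le0.
  by rewrite eXn1 orient_lerp_last mulr_ge0 ?oppr_ge0 ?left_uw.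
- have colm : orient u w Xm = 0.
    apply/eqP; rewrite eq_le left_uw andbT.
    by move: fan_mn; rewrite eXn orient_lerp_last mulNr oppr_ge0 pmulr_rle0.
  have eXm := collinear_lerp uw colm; set mu := line_coord u w Xm in eXm.
  have mu_ge0 : 0 <= mu.
    by rewrite leNgt; apply/negP => mu_lt0; apply: not_mn.
  split; last by move=> [[_]]; rewrite -/mu ltNge mu_ge0.
  by rewrite eXm orient_lerp_mid mulr_ge0 ?left_uw.
- exfalso; apply: (@shift_neq i n); first by rewrite (leq_trans m_gt0) // ltnW.
  by apply: b_inj; rewrite -/Xn eXn la0 lerp0.
Qed.

Lemma orient_fan i m n : (m <= n <= k)%N -> 0 <= orient (b i) (b (shift i m)) (b (shift i n)).
Proof.
case/andP; case: m => [_ _|m]; first by rewrite /shift /= orient_ppq.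
move=> le_mn; rewrite leq_eqVlt => /orP[/eqP -> |lt_nk]; first by rewrite shiftk orient_pqp.
suff : 0 <= orient (b i) (b (shift i m.+1)) (b (shift i n)) /\
  ~ (behind (b i) (b (ordS i)) (b (shift i m.+1)) /\ ahead (b i) (b (ordS i)) (b (shift i n))).
  by case.
elim: n le_mn lt_nk => // n IH; rewrite leq_eqVlt => /orP[/eqP [<-] _|le_mn lt_nk].
  by split; [rewrite orient_pqq | move=> [[_ /lt_trans lt] [_ /lt]]; rewrite ltxx].
by case: (IH le_mn (ltnW lt_nk)) => fan_mn not_mn; apply: fan_step; rewrite ?le_mn.
Qed.

(** * The GtM step *)

Section GtMStep.
Variable eps : R.
Hypothesis eps_ge0 : 0 <= eps.
Hypothesis eps_lt_half : eps < 1 / 2.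
Notation bp := (Phi eps b).
Local Notation wave_wind j := (wind_quad (b j) (b (ordS j)) (bp (ordS j)) (bp j)).

Lemma PhiE j : bp j = mix eps (b (ord_pred j)) (b j) (b (ordS j)).
Proof. by []. Qed.

(* [b (shift (ord_pred j) d)] is b_{j-1+d}; the excluded b_j and b_{j+1} (d = 1, 2)
   lie to the right of the new edge. *)
Lemma Phi_edge_left_vertex j d : (d <= k)%N -> d != 1%N -> d != 2%N ->
  0 <= orient (bp j) (bp (ordS j)) (b (shift (ord_pred j) d)).
Proof.
move=> le_dk d1 d2; rewrite !PhiE ordSK; set i0 := ord_pred j.
have -> : j = shift i0 1 by rewrite /i0 /shift /= ord_predK.
rewrite !shiftS orient_mix_mix.
have edge e t : 0 <= orient (b (shift i0 e)) (b (shift i0 e.+1)) (b t).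
  by rewrite -shiftS; apply: b_left.
have fan_u f : (2 <= f <= k)%N ->
    0 <= orient (b (shift i0 1)) (b (shift i0 3)) (b (shift i0 (1 + f))).
  by move=> f2k; have := orient_fan (shift i0 1) f2k; rewrite !shift_add.
(* [lra] and [nra] ignore section hypotheses, hence these local copies. *)
have e0 := eps_ge0; have e1 := eps_lt_half.
have c1 : 0 <= eps ^+ 2 / 4 by rewrite divr_ge0 ?sqr_ge0.
have c2 : 0 <= eps * (1 - eps) / 2 by nra.
have c3 : 0 <= (1 - 3 * eps / 2) * (1 - eps / 2) by nra.
have [->|d_ge3] : d = 0%N \/ (3 <= d)%N by lia.
  have ua : 0 <= orient (b (shift i0 1)) (b (shift i0 3)) (b i0).
    by have := fan_u k.-1; rewrite add1n prednK ?shiftk; [apply; lia | lia].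
  have e01 := edge 0%N i0; have e12 := edge 1%N i0; have e23 := edge 2%N i0.
  have -> : shift i0 0 = i0 by [].
  rewrite !orient_pqp !add0r.
  by do ![done | apply: addr_ge0 | apply: mulr_ge0].
have fan_a e : (e <= d)%N -> 0 <= orient (b i0) (b (shift i0 e)) (b (shift i0 d)).
  by move=> le_ed; apply: orient_fan; rewrite le_ed.
have ua : 0 <= orient (b (shift i0 1)) (b (shift i0 3)) (b (shift i0 d)).
  by have := fan_u d.-1; rewrite add1n prednK; [apply; lia | lia].
have e01 := edge 0%N (shift i0 d); have e12 := edge 1%N (shift i0 d).
have e23 := edge 2%N (shift i0 d).
have a1 := fan_a 1%N (ltnW (ltnW d_ge3)); have a2 := fan_a 2%N (ltnW d_ge3).
have a3 := fan_a 3%N d_ge3.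
by do ![done | apply: addr_ge0 | apply: mulr_ge0].
Qed.

Lemma Phi_consecutive_left j : 0 <= orient (bp (ord_pred j)) (bp j) (bp (ordS j)).
Proof.
have e0 := eps_ge0; have e1 := eps_lt_half.
case: (eqVneq k 3) => [k3|k_ne3].
  have e3 : shift j 3 = j by apply: val_inj; rewrite val_shift -[3%N]k3 modnDr modn_small.
  have epj : ord_pred j = ordS (ordS j).
    by apply: ordS_inj; rewrite ord_predK -[RHS]/(shift j 3) e3.
  rewrite !PhiE ord_predK ordSK -epj {1}epj ordSK orient_mix_triangle.
  by rewrite mulr_ge0 ?sqr_ge0 // -{2}(ord_predK j) b_left.
set i0 := shift j (k - 2).
have ej : j = shift i0 2 by rewrite shift_add subnK ?shiftk //; lia.
rewrite ej shift_pred -[ordS _]/(shift i0 3) !PhiE !shift_pred !shiftS.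
rewrite orient_mix_consecutive.
have k4 : (4 <= k)%N by rewrite ltn_neqAle eq_sym k_ne3.
have fan e f g : (f <= g <= 4)%N ->
    0 <= orient (b (shift i0 e)) (b (shift i0 (e + f))) (b (shift i0 (e + g))).
  by case/andP=> fg g4; rewrite -!shift_add; apply: orient_fan; rewrite fg (leq_trans g4).
have f1 := fan 0 1 2 isT; have f2 := fan 0 1 3 isT; have f3 := fan 0 1 4 isT.
have f4 := fan 0 2 3 isT; have f5 := fan 0 2 4 isT; have f6 := fan 0 3 4 isT.
have f7 := fan 1 1 2 isT; have f8 := fan 1 1 3 isT; have f9 := fan 1 2 3 isT.
have f10 := fan 2 1 2 isT.
have c1 : 0 <= eps ^+ 3 / 8 by rewrite divr_ge0 ?exprn_ge0.
have c2 : 0 <= eps ^+ 2 * (1 - eps) / 4 by nra.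
have c3 : 0 <= eps / 2 * ((1 - eps / 2) * (1 - 3 * eps / 2)) by nra.
have c4 : 0 <= (1 - eps) * (1 - 2 * eps + eps ^+ 2 / 2) by nra.
by do ![done | apply: addr_ge0 | apply: mulr_ge0].
Qed.

Lemma Phi_left j m : 0 <= orient (bp j) (bp (ordS j)) (bp m).
Proof.
have e0 := eps_ge0; have e1 := eps_lt_half.
set i0 := ord_pred j; have [d lt_dk ->] := shift_surj i0 m.
have ej : j = shift i0 1 by rewrite /i0 /shift /= ord_predK.
case: (ltnP d 4) => [lt_d4|ge_d4].
  case: d lt_dk lt_d4 => [|[|[|[|//]]]] _ _.
  - by rewrite -orient_rot; apply: Phi_consecutive_left.
  - by rewrite -ej orient_pqp.
  - by rewrite -shiftS -ej orient_pqq.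
  - by have := Phi_consecutive_left (ordS j); rewrite ordSK ej !shiftS.
have lt_d1 : (d.-1.+1 = d)%N by rewrite prednK // (leq_trans _ ge_d4).
rewrite [bp (shift i0 d)]PhiE orient_mix -{1}lt_d1 shift_pred shiftS.
have left_d f : (3 <= f)%N -> (f <= k)%N ->
    0 <= orient (bp j) (bp (ordS j)) (b (shift i0 f)).
  by move=> f3 fk; apply: Phi_edge_left_vertex => //; apply/eqP; lia.
have w1 : 0 <= eps / 2 by lra.
have w2 : 0 <= 1 - eps by lra.
by rewrite !addr_ge0 ?(mulr_ge0 w1) ?(mulr_ge0 w2) ?left_d //; lia.
Qed.

Lemma quad_base_left j :
  0 <= orient (b j) (b (ordS j)) (bp (ordS j)) /\ 0 <= orient (b j) (b (ordS j)) (bp j).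
Proof.
have w : 0 <= eps / 2 by have := eps_ge0; lra.
rewrite !PhiE ordSK !orient_mix orient_pqp orient_pqq !mulr0 !addr0 add0r.
by split; apply: mulr_ge0.
Qed.

Lemma quad_diagonal_left j :
  0 <= orient (b j) (bp (ordS j)) (bp j) \/ 0 <= orient (b (ordS j)) (bp (ordS j)) (bp j).
Proof.
have e0 := eps_ge0; have e1 := eps_lt_half.
have A := b_left j (ord_pred j).
have B := b_left (ord_pred j) (ordS (ordS j)); rewrite ord_predK in B.
have := orient_mix_diagonals eps (b (ord_pred j)) (b j) (b (ordS j)) (b (ordS (ordS j))).
rewrite !PhiE ordSK; set X := orient (b j) _ _; set Y := orient (b (ordS j)) _ _ => Id.
case: (lerP 0 X) => [|X_lt0]; first by left.
case: (lerP 0 Y) => [|Y_lt0]; first by right.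
have : 0 <= eps / 2 * ((1 - 3 * eps / 2) * orient (b j) (b (ordS j)) (b (ord_pred j))
    + eps / 2 * orient (b (ord_pred j)) (b j) (b (ordS (ordS j)))).
  by rewrite mulr_ge0 ?addr_ge0 ?mulr_ge0 //; lra.
have : (1 - eps / 2) * X < 0 by rewrite pmulr_rlt0 //; lra.
have : eps / 2 * Y <= 0 by apply: mulr_ge0_le0; [lra | exact: ltW].
lra.
Qed.

Lemma quad_not_twisted j : ~ twisted (b j) (b (ordS j)) (bp (ordS j)) (bp j).
Proof.
have [uvQ uvP] := quad_base_left j.
have neg (y z : R) : 0 <= z -> y * z < 0 -> y < 0.
  by move=> z_ge0; apply: contraTT; rewrite -!leNgt => /mulr_ge0; apply.
rewrite /twisted /proper_cross => -[[cross _]|[cross1 cross2]].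
  by move: cross; rewrite ltNge mulr_ge0.
rewrite orient_rot in uvQ; rewrite orient_rot orient_rot in uvP.
have vQP := neg _ _ uvQ cross1.
rewrite mulrC in cross2; have {}PuQ := neg _ _ uvP cross2.
rewrite -orient_rot -orient_rot in PuQ.
by case: (quad_diagonal_left j); rewrite leNgt ?vQP ?PuQ.
Qed.

Lemma wave_wind_ge0 j x : 0 <= wave_wind j x.
Proof.
have [uvQ uvP] := quad_base_left j.
move: uvQ uvP (quad_diagonal_left j).
set u := b j; set v := b (ordS j); set Q := bp (ordS j); set P := bp j.
move=> uvQ uvP [uQP|vQP].
  have -> : wind_quad u v Q P x = (wind_edge u v x + wind_edge v Q x + wind_edge Q u x)
      + (wind_edge u Q x + wind_edge Q P x + wind_edge P u x).
    by rewrite /wind_quad (wind_edge_swap u Q); ring.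
  by rewrite addr_ge0 ?wind_tri_ge0.
have -> : wind_quad u v Q P x = (wind_edge u v x + wind_edge v P x + wind_edge P u x)
    + (wind_edge v Q x + wind_edge Q P x + wind_edge P v x).
  by rewrite /wind_quad (wind_edge_swap v P); ring.
by rewrite addr_ge0 ?wind_tri_ge0.
Qed.

Lemma sum_wave_wind x :
  \sum_(j < k) wave_wind j x = wind_poly b x - wind_poly bp x.
Proof.
have reindexS : \sum_(j < k) wind_edge (b (ordS j)) (bp (ordS j)) x
    = \sum_(j < k) wind_edge (b j) (bp j) x by rewrite [RHS](reindex_inj (@ordS_inj k)).
have inner : \sum_(j < k) wind_edge (bp (ordS j)) (bp j) x = - wind_poly bp x.
  by rewrite -sumrN; apply: eq_bigr => j _; rewrite wind_edge_swap.
have sides : \sum_(j < k) wind_edge (bp j) (b j) x = - \sum_(j < k) wind_edge (b j) (bp j) x.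
  by rewrite -sumrN; apply: eq_bigr => j _; rewrite wind_edge_swap.
by rewrite /wind_quad !big_split /= reindexS inner sides -/(wind_poly b x); ring.
Qed.

Lemma quad_interiors_disjoint j j' x : j != j' ->
  ~ (quad_interior (b j) (b (ordS j)) (bp (ordS j)) (bp j) x /\
     quad_interior (b j') (b (ordS j')) (bp (ordS j')) (bp j') x).
Proof.
move=> ne_jj' [[_ nz] [_ nz']].
have ge1 i : wave_wind i x != 0 -> 1 <= wave_wind i x.
  by move=> nz_i; rewrite -gtz0_ge1 lt_def nz_i wave_wind_ge0.
have := sum_wave_wind x; rewrite (bigD1 j) // (bigD1 j') 1?eq_sym //=.
have rest : 0 <= \sum_(i < k | (i != j) && (i != j')) wave_wind i x.
  by apply: sumr_ge0 => i _; apply: wave_wind_ge0.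
have := wind_poly_le1 x; have := wind_poly_ge0 x Phi_left.
have := ge1 _ nz; have := ge1 _ nz'; lra.
Qed.

End GtMStep.

End ConvexPolygon.

Unset Implicit Arguments.

Theorem mainTheorem7 (R : realFieldType) (k : nat) (eps : R)
    (b : 'I_k -> (R * R)%type) :
  (3 <= k)%N -> 0 <= eps -> eps < 1 / 2 -> convex_ccw b ->
  let bp := Phi eps b in
  (forall j : 'I_k, ~ twisted (b j) (b (ordS j)) (bp (ordS j)) (bp j)) /\
  (forall j j' : 'I_k, j != j' -> forall x : R * R,
     ~ (quad_interior (b j) (b (ordS j)) (bp (ordS j)) (bp j) x /\
        quad_interior (b j') (b (ordS j')) (bp (ordS j')) (bp j') x)).
Proof.
move=> k_ge3 eps_ge0 eps_lt_half [b_inj [b_left b_nondeg]] bp.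
split=> [j|j j' ne_jj' x]; first exact: quad_not_twisted.
exact: quad_interiors_disjoint.
Qed.
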